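(* Let $\mathcal{S}\subseteq\mathcal{L}$ and let $\mathcal{AF}_{\vdash}=(\vdash,\overline{\cdot},\mathsf{id})$ be contrapositable with $\vdash$ satisfying Cut. Then the grounded extension of $\mathcal{AF}_{\mathsf{con}}(\mathcal{S})$ equals $\mathit{Arg}_{\vdash}\left(\bigcap\mathsf{MCS}(\mathcal{AF}_{\vdash}(\mathcal{S}))\right)$.
   Context: $\mathcal{L}$ is a set of formulas; ${\vdash}\subseteq\wp_{\sf fin}(\mathcal{L})\times\mathcal{L}$ is arbitrary and $\overline{\cdot}:\mathcal{L}\to\wp(\mathcal{L})$. $\mathit{Arg}_{\vdash'}(\mathcal{S})=\{(\Gamma,\gamma):\Gamma\subseteq\mathcal{S}\text{ finite},\Gamma\vdash'\gamma\}$; in $\mathcal{AF}_{\vdash'}(\mathcal{S})$, $(\Gamma,\gamma)$ attacks $(\Gamma',\gamma')$ iff $\gamma\in\overline{\lambda}$ for some $\lambda\in\Gamma'$. The grounded extension is the $\subseteq$-minimal complete extension (complete = conflict-free, defends every member, and contains every argument it defends). $\vdash^{+\phi}$ is the transitive closure of ${\vdash}\cup\{(\emptyset,\phi)\}$; Cut: for every $\phi$ and finite $\Gamma,\Delta$, if $\Gamma\vdash\phi$ and $\Delta\vdash^{+\phi}\gamma$ then $\Gamma\cup\Delta\vdash\gamma$. Contrapositable: for all finite $\Theta$, if $\Theta\vdash\gamma'$ with $\gamma'\in\overline{\gamma}$, then for every $\sigma\in\Theta$, $(\Theta\cup\{\gamma\})\setminus\{\sigma\}\vdash\sigma'$ for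 some $\sigma'\in\overline{\sigma}$. $\Theta\subseteq\mathcal{S}$ is $\mathcal{AF}_{\vdash}(\mathcal{S})$-inconsistent iff there are $\Theta'\subseteq\Theta$ and $\gamma\in\Theta'$ with $\Theta'\setminus\{\gamma\}\vdash\gamma'$ for some $\gamma'\in\overline{\gamma}$, consistent otherwise; $\mathsf{MCS}(\mathcal{AF}_{\vdash}(\mathcal{S}))$ is the set of maximal consistent subsets of $\mathcal{S}$. $\vdash_{\mathsf{con}}=\{(\Gamma,\gamma):\Gamma\vdash\gamma,\ \Gamma\text{ consistent}\}$ and $\mathcal{AF}_{\mathsf{con}}(\mathcal{S})=\mathcal{AF}_{\vdash_{\mathsf{con}}}(\mathcal{S})$. *)

From mathcomp Require Import all_boot.
From mathcomp Require Import boolp classical_sets cardinality.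
Set Implicit Arguments. Unset Strict Implicit. Unset Printing Implicit Defensive.
Local Open Scope classical_set_scope.

Definition argument (L : Type) := (set L * L)%type.

Definition Arg (L : Type) (d : set L -> L -> Prop) (S : set L) : set (argument L) :=
  [set a | finite_set a.1 /\ a.1 `<=` S /\ d a.1 a.2].

Definition attacks (L : Type) (ctr : L -> set L) (a b : argument L) : Prop :=
  exists lam, b.1 lam /\ ctr lam a.2.

Definition conflict_free (L : Type) (ctr : L -> set L) (E : set (argument L)) :=
  forall a b, E a -> E b -> ~ attacks ctr a b.

Definition defends (L : Type) (ctr : L -> set L) (A E : set (argument L))
  (a : argument L) :=
  forall b, A b -> attacks ctr b a -> exists2 c, E c & attacks ctr c b.

Definition complete_ext (L : Type) (ctr : L -> set L) (A E : set (argument L)) :=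
  [/\ E `<=` A, conflict_free ctr E,
      (forall a, E a -> defends ctr A E a)
    & (forall a, A a -> defends ctr A E a -> E a)].

Definition grounded_ext (L : Type) (ctr : L -> set L) (A E : set (argument L)) :=
  complete_ext ctr A E /\
  forall E', complete_ext ctr A E' -> E' `<=` E -> E' = E.

Definition inconsistent (L : Type) (d : set L -> L -> Prop) (ctr : L -> set L)
  (T : set L) :=
  exists T', exists g, exists g',
    [/\ T' `<=` T, T' g, ctr g g' & d (T' `\ g) g'].

Definition consistent (L : Type) (d : set L -> L -> Prop) (ctr : L -> set L)
  (T : set L) := ~ inconsistent d ctr T.

Definition MCS (L : Type) (d : set L -> L -> Prop) (ctr : L -> set L) (S : set L)
  : set (set L) :=
  [set M | [/\ M `<=` S, consistent d ctr M &
     forall M', M `<=` M' -> M' `<=` S -> consistent d ctr M' -> M' = M]].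

Definition bigcap_MCS (L : Type) (d : set L -> L -> Prop) (ctr : L -> set L)
  (S : set L) : set L :=
  [set x | forall M, MCS d ctr S M -> M x].

Definition vdash_con (L : Type) (d : set L -> L -> Prop) (ctr : L -> set L)
  : set L -> L -> Prop :=
  fun G g => d G g /\ consistent d ctr G.

(* ⊢^{+φ}: transitive closure of ⊢ ∪ {(∅, φ)}:
   closed under  G ⊢ δ, (D ∪ {δ}) ⊢ γ  ==>  (G ∪ D) ⊢ γ. *)
Inductive vdash_plus (L : Type) (d : set L -> L -> Prop) (phi : L)
  : set L -> L -> Prop :=
| vp_base G g : d G g -> vdash_plus d phi G g
| vp_phi : vdash_plus d phi set0 phi
| vp_trans G D dl g :
    vdash_plus d phi G dl -> vdash_plus d phi (D `|` [set dl]) g ->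
    vdash_plus d phi (G `|` D) g.

Definition satisfies_cut (L : Type) (d : set L -> L -> Prop) :=
  forall phi G D g, finite_set G -> finite_set D ->
    d G phi -> vdash_plus d phi D g -> d (G `|` D) g.

Definition contrapositable (L : Type) (d : set L -> L -> Prop) (ctr : L -> set L) :=
  forall (T : set L) g g', finite_set T -> d T g' -> ctr g g' ->
    forall s, T s -> exists2 s', ctr s s' & d ((T `|` [set g]) `\ s) s'.

(** A consistent set of premises extends, by Zorn's lemma and the finiteness
    of inconsistency witnesses, to a maximal consistent subset of [S].  So an
    argument of [AF_con(S)] attacking an argument whose premises lie in every
    maximal consistent subset would, by contrapositability, make the maximal
    consistent extension of the attacker's premises inconsistent.  These
    unattacked arguments thus form a conflict-free, self-defending set
    contained in every complete extension.  It is closed under defence: if a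
    premise [l] of a defended argument misses a maximal consistent subset [M],
    then [M] plus [l] is inconsistent, and contrapositability yields an
    argument from premises in [M] for a contrary of [l]; its defender attacks
    it with premises in [M], against the consistency of [M]. *)

From mathcomp Require Import all_boot.
From mathcomp Require Import boolp classical_sets cardinality.
Local Open Scope classical_set_scope.

Lemma finite_subset_bigcup_chain (T : Type) (F : set (set T)) (V : set T) :
  F !=set0 -> total_on F subset -> finite_set V ->
  V `<=` \bigcup_(X in F) X -> exists2 X, F X & V `<=` X.
Proof.
elim/Peq : T => T in F V *.
move=> [X0 FX0] Ftot /finite_seqP[s ->]; elim: s => [|x s IHs] sF.
  by exists X0 => // y /=; rewrite in_nil.
have [X FX sX] : exists2 X, F X & [set` s] `<=` X.
  by apply: IHs => y sy; apply: sF; rewrite /= in_cons sy orbT.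
have [Y FY Yx] : (\bigcup_(X in F) X) x by apply: sF; rewrite /= in_cons eqxx.
have mem_cons y : y \in x :: s -> y = x \/ y \in s.
  by rewrite in_cons => /orP[/eqP|]; [left|right].
have [XY|YX] := Ftot _ _ FX FY.
- by exists Y => // y /mem_cons[->|/sX/XY].
- by exists X => // y /mem_cons[->|/sX]//; apply: YX.
Qed.

Section Consistency.
Set Implicit Arguments.
Unset Strict Implicit.
Variables (L : Type) (d : set L -> L -> Prop) (ctr : L -> set L).
Hypothesis d_fin : forall G g, d G g -> finite_set G.

Lemma inconsistentS (A B : set L) :
  A `<=` B -> inconsistent d ctr A -> inconsistent d ctr B.
Proof.
move=> AB [T [g [g' [TA Tg ctr_g dT]]]].
by exists T, g, g'; split=> //; apply: subset_trans AB.
Qed.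

Lemma consistentS (A B : set L) :
  A `<=` B -> consistent d ctr B -> consistent d ctr A.
Proof. by move=> AB cB iA; apply/cB/(inconsistentS AB). Qed.

Lemma consistent0 : consistent d ctr set0.
Proof. by move=> [T [g [_ [T0 Tg _ _]]]]; apply: T0 Tg. Qed.

Lemma inconsistent_finite (A : set L) : inconsistent d ctr A ->
  exists2 V, finite_set V & V `<=` A /\ inconsistent d ctr V.
Proof.
move=> [T [g [g' [TA Tg ctr_g dT]]]].
have VgE : ((T `\ g) `|` [set g]) `\ g = T `\ g by apply: setUDK => y [-> [_ /(_ erefl)]].
exists ((T `\ g) `|` [set g]).
  by rewrite finite_setU; split; [exact: d_fin dT | exact: finite_set1].
split; first by move=> y [[/TA //]|->]; apply: TA.
by exists ((T `\ g) `|` [set g]), g, g'; split; rewrite ?VgE //; right.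
Qed.

Lemma consistent_setU_bigcup_chain (D : set L) (F : set (set L)) :
  total_on F subset -> consistent d ctr D ->
  (forall X, F X -> consistent d ctr (D `|` X)) ->
  consistent d ctr (D `|` \bigcup_(X in F) X).
Proof.
move=> Ftot cD cDF; have [->|F0] := eqVneq F set0.
  by rewrite bigcup_set0 setU0.
move=> /inconsistent_finite[V Vfin [VDF iV]].
have [X FX VDX] : exists2 X, F X & V `\` D `<=` X.
  apply: finite_subset_bigcup_chain => //; first exact/set0P.
    exact: finite_setD.
  by move=> y [/VDF[]].
apply: (cDF X FX); apply: inconsistentS iV => y Vy.
by have [Dy|nDy] := pselect (D y); [left|right; apply: VDX].
Qed.

Lemma MCS_extend (S D : set L) : D `<=` S -> consistent d ctr D ->
  exists2 M, MCS d ctr S M & D `<=` M.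
Proof.
move=> DS cD.
(* Zorn's lemma is applied to the increments over [D], so that the empty
   chain has an upper bound in the family. *)
pose P := [set X | consistent d ctr (D `|` X) /\ X `<=` S].
have P_chain F : F `<=` P -> total_on F subset -> P (\bigcup_(X in F) X).
  move=> FP Ftot; split; last by move=> y [X /FP[_ XS] /XS].
  by apply: consistent_setU_bigcup_chain => // X /FP[].
have [X [[cDX XS] Xmax]] := Zorn_bigcup P_chain.
exists (D `|` X); last by move=> y; left.
split=> [y [/DS|/XS]//|//|M DXM MS cM].
apply/seteqP; split=> //; apply: contrapT => MDX.
have DM : D `|` M = M by apply/setUidPr => y Dy; apply: DXM; left.
apply: (Xmax M); last by split; rewrite ?DM.
by split=> [y Xy|MX]; [apply: DXM; right | apply: MDX => y /MX; right].
Qed.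

Hypothesis Hcontra : contrapositable d ctr.

Lemma attack_inconsistent (G : set L) g l :
  d G g -> ctr l g -> inconsistent d ctr (G `|` [set l]).
Proof.
move=> dG ctr_l; have [G0|/set0P[s Gs]] := eqVneq G set0.
  by exists [set l], l, g; split=> //; rewrite setDv -G0.
have [s' ctr_s ds'] := Hcontra (d_fin dG) dG ctr_l Gs.
by exists (G `|` [set l]), s, s'; split=> //; left.
Qed.

Lemma consistent_no_attack (M G : set L) g l :
  consistent d ctr M -> G `<=` M -> M l -> d G g -> ~ ctr l g.
Proof.
move=> cM GM Ml dG /(attack_inconsistent dG); apply/consistentS: cM.
by move=> y [/GM|->].
Qed.

Lemma inconsistent_setU1_contrary (M : set L) l :
  consistent d ctr M -> inconsistent d ctr (M `|` [set l]) ->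
  exists T l', [/\ T `<=` M, d T l' & ctr l l'].
Proof.
move=> cM [T [g [g' [TMl Tg ctr_g dT]]]].
have TM_l y : T y -> y <> l -> M y by move=> /TMl[].
have [Tl|nTl] := pselect (T l); last first.
  case: cM; exists T, g, g'; split=> // y Ty.
  by apply: TM_l => // yl; apply: nTl; rewrite -yl.
have [gl|gl] := pselect (g = l).
  by subst g; exists (T `\ l), g'; split=> // y [Ty nyl]; apply: TM_l.
have Tgl : (T `\ g) l by split=> // /esym/gl.
have [l' ctr_l dl'] := Hcontra (d_fin dT) dT ctr_g Tgl.
by exists (((T `\ g) `|` [set g]) `\ l), l'; split=> // y [[[Ty _]|->] yl]; exact: TM_l.
Qed.

Lemma MCS_setU1_inconsistent (S M : set L) l :
  MCS d ctr S M -> S l -> ~ M l -> inconsistent d ctr (M `|` [set l]).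
Proof.
move=> [MS _ Mmax] Sl nMl; apply: contrapT => cMl; apply: nMl.
have <- : M `|` [set l] = M by apply: Mmax => // y [/MS|->].
by right.
Qed.

End Consistency.

Section UnattackedArguments.
Set Implicit Arguments.
Unset Strict Implicit.
Variables (L : Type) (ctr : L -> set L) (A : set (argument L)).

Definition unattacked (a : argument L) := forall b, A b -> ~ attacks ctr b a.

Lemma complete_ext_unattacked E a :
  complete_ext ctr A E -> A a -> unattacked a -> E a.
Proof. by move=> [_ _ _ closedE] Aa ua; apply: closedE => // b /ua. Qed.

Lemma complete_ext_of_unattacked G :
  G `<=` A -> (forall a, G a -> unattacked a) ->
  (forall a, A a -> defends ctr A G a -> G a) -> complete_ext ctr A G.
Proof.
move=> GA uG closedG; split=> // [a b Ga Gb|a Ga b Ab /(uG a Ga b Ab)//].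
exact: uG (GA _ Ga).
Qed.

Lemma grounded_extE G : complete_ext ctr A G ->
  (forall E, complete_ext ctr A E -> G `<=` E) ->
  forall E, grounded_ext ctr A E <-> E = G.
Proof.
move=> cG Gleast E; split=> [[cE Emin]|->].
  by apply/esym/Emin => //; apply: Gleast.
by split=> // E' cE' E'G; apply/seteqP; split=> //; apply: Gleast.
Qed.

End UnattackedArguments.

Section GroundedCon.
Set Implicit Arguments.
Unset Strict Implicit.
Variables (L : Type) (d : set L -> L -> Prop) (ctr : L -> set L) (S : set L).
Hypothesis d_fin : forall G g, d G g -> finite_set G.
Hypothesis Hcontra : contrapositable d ctr.

Let F := bigcap_MCS d ctr S.
Let A := Arg (vdash_con d ctr) S.

Lemma Arg_bigcap_MCS_sub : Arg d F `<=` A.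
Proof.
have [M MCS_M _] := MCS_extend d_fin (sub0set S) (@consistent0 _ d ctr).
have FM : F `<=` M by move=> y; apply.
case: MCS_M => MS cM _.
move=> [G g] [Gfin [/= GF dG]]; have GM := subset_trans GF FM.
split=> //; split; first exact: subset_trans GM MS.
by split=> //; apply: consistentS GM cM.
Qed.

Lemma Arg_bigcap_MCS_unattacked a : Arg d F a -> unattacked ctr A a.
Proof.
move=> [_ [aF _]] [D g] [_ [/= DS [dD cD]]] [l [/aF Fl /= ctr_l]].
have [M MCS_M DM] := MCS_extend d_fin DS cD.
have Ml : M l := Fl _ MCS_M.
by case: MCS_M => _ cM _; apply: (consistent_no_attack d_fin Hcontra cM DM Ml dD).
Qed.

Lemma defended_Arg_bigcap_MCS a :
  A a -> defends ctr A (Arg d F) a -> Arg d F a.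
Proof.
move=> [afin [aS [da _]]] def; split=> //; split=> //.
move=> l al; apply: contrapT => /existsNP[M /not_implyP[MCS_M nMl]].
have [MS cM _] := MCS_M.
have [T [l' [TM dT ctr_l]]] := inconsistent_setU1_contrary d_fin Hcontra cM
  (MCS_setU1_inconsistent MCS_M (aS _ al) nMl).
have AT : A (T, l').
  split; first exact: d_fin dT.
  by split; [exact: subset_trans TM MS | split; last exact: consistentS TM cM].
have [[D g] [_ [/= DF dD]] [t [/= Tt ctr_t]]] := def _ AT (ex_intro _ l (conj al ctr_l)).
have DM : D `<=` M by move=> y /DF; apply.
exact: (consistent_no_attack d_fin Hcontra cM DM (TM _ Tt) dD).
Qed.

End GroundedCon.

Theorem lemma12 (L : Type) (d : set L -> L -> Prop) (ctr : L -> set L) (S : set L)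
  (d_fin : forall G g, d G g -> finite_set G)
  (Hcontra : contrapositable d ctr) (Hcut : satisfies_cut d) :
  forall E, grounded_ext ctr (Arg (vdash_con d ctr) S) E <->
            E = Arg d (bigcap_MCS d ctr S).
Proof.
have G_sub := @Arg_bigcap_MCS_sub _ _ ctr S d_fin.
have G_unattacked := @Arg_bigcap_MCS_unattacked _ _ ctr S d_fin Hcontra.
have G_closed := @defended_Arg_bigcap_MCS _ _ ctr S d_fin Hcontra.
apply: grounded_extE => [|E cE a Ga].
  exact: complete_ext_of_unattacked G_sub G_unattacked G_closed.
exact: complete_ext_unattacked cE (G_sub _ Ga) (G_unattacked _ Ga).
Qed.
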